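(* Let $n\ge2$, let $\mathfrak{g}_n$ be the Lie algebra defined in the context, $Z(\mathfrak{g}_n)=\operatorname{span}\{z_{i,j}\}$ its centre and $\overline{\mathfrak{g}}_n=\mathfrak{g}_n/Z(\mathfrak{g}_n)$. The map $\overline{\rho}:\overline{\mathfrak{g}}_n\to\mathfrak{sl}_n(\mathbb{K})$ sending the class of $x=ah+bx_++cx_-+\sum_{i=1}^{n-2}(d_iy_{i,+}+e_iy_{i,-})$ to the $n\times n$ matrix whose first $n-2$ rows are zero, whose $(n-1)$-th row is $(d_1,\dots,d_{n-2},a,b)$ and whose $n$-th row is $(e_1,\dots,e_{n-2},c,-a)$, is a representation of $\overline{\mathfrak{g}}_n$.
   Context: $\mathbb{K}$ is $\mathbb{R}$ or $\mathbb{C}$. For $n\ge2$, $\mathfrak{g}_n$ is the Lie algebra with basis $h,x_-,x_+$, $y_{i,\pm}$ ($1\le i\le n-2$), $z_{i,j}$ ($1\le i\le j\le n-2$), whose nonzero brackets (up to antisymmetry) are $[x_+,x_-]=h$, $[h,x_\pm]=\pm2x_\pm$, $[h,y_{i,\pm}]=\pm y_{i,\pm}$, $[x_-,y_{i,+}]=y_{i,-}$, $[x_+,y_{i,-}]=y_{i,+}$, $[y_{i,+},y_{j,-}]=z_{\min(i,j),\max(i,j)}$; all other brackets of basis elements vanish. *)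

From HB Require Import structures.
From mathcomp Require Import all_boot all_order all_algebra.
Set Implicit Arguments. Unset Strict Implicit. Unset Printing Implicit Defensive.
Import Order.TTheory GRing.Theory Num.Theory.
Local Open Scope ring_scope.

(* k = n - 2 : number of y_{i,+} (resp. y_{i,-}); indices i are 'I_k (0-based). *)

(* index set of the z_{i,j}, i <= j *)
Definition Zidx (k : nat) := {p : 'I_k * 'I_k | (p.1 <= p.2)%N}.

(* labels of the basis of the quotient  gbar_n = g_n / Z(g_n):
   classes of h, x_+, x_-, y_{i,+}, y_{i,-} *)
Definition Bbar (k : nat) := ((((unit + unit) + unit) + 'I_k) + 'I_k)%type.
(* labels of the basis of g_n : h, x_+, x_-, y_{i,+}, y_{i,-}, z_{i,j} *)
Definition B (k : nat) := (Bbar k + Zidx k)%type.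

Inductive lbl (k : nat) :=
| LH | LXp | LXm | LYp of 'I_k | LYm of 'I_k | LZ of Zidx k.

Definition lab (k : nat) (b : B k) : lbl k :=
  match b with
  | inl (inl (inl (inl (inl tt)))) => LH k
  | inl (inl (inl (inl (inr tt)))) => LXp k
  | inl (inl (inl (inr tt))) => LXm k
  | inl (inl (inr i)) => LYp i
  | inl (inr i) => LYm i
  | inr p => LZ p
  end.

Definition bH k : B k := inl (inl (inl (inl (inl tt)))).
Definition bXp k : B k := inl (inl (inl (inl (inr tt)))).
Definition bXm k : B k := inl (inl (inl (inr tt))).
Definition bYp k (i : 'I_k) : B k := inl (inl (inr i)).
Definition bYm k (i : 'I_k) : B k := inl (inr i).

Definition gn (K : fieldType) (k : nat) := {ffun B k -> K}.

Definition gscale (K : fieldType) k (a : K) (u : gn K k) : gn K k :=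
  [ffun c => a * u c].

Definition ev (K : fieldType) k (b : B k) : gn K k := [ffun c => (c == b)%:R].

Definition zv (K : fieldType) k (i j : 'I_k) : gn K k :=
  match (insub (if (i <= j)%N then (i, j) else (j, i)) : option (Zidx k)) with
  | Some p => ev K (inr p)
  | None => 0
  end.

Definition br (K : fieldType) k (a b : B k) : gn K k :=
  match lab a, lab b with
  | LXp, LXm => ev K (bH k)
  | LXm, LXp => - ev K (bH k)
  | LH, LXp => gscale 2%:R (ev K (bXp k))
  | LXp, LH => - (gscale 2%:R (ev K (bXp k)))
  | LH, LXm => - (gscale 2%:R (ev K (bXm k)))
  | LXm, LH => gscale 2%:R (ev K (bXm k))
  | LH, LYp i => ev K (bYp i)
  | LYp i, LH => - ev K (bYp i)
  | LH, LYm i => - ev K (bYm i)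
  | LYm i, LH => ev K (bYm i)
  | LXm, LYp i => ev K (bYm i)
  | LYp i, LXm => - ev K (bYm i)
  | LXp, LYm i => ev K (bYp i)
  | LYm i, LXp => - ev K (bYp i)
  | LYp i, LYm j => zv K i j
  | LYm j, LYp i => - zv K i j
  | _, _ => 0
  end.

Definition gbracket (K : fieldType) k (u v : gn K k) : gn K k :=
  \sum_(a : B k) \sum_(b : B k) gscale (u a * v b) (br K a b).

(* elements of the quotient gbar_n = g_n / span{z_{i,j}}, as coordinate
   vectors in the basis of classes of h, x_+, x_-, y_{i,+}, y_{i,-} *)
Definition gbar (K : fieldType) (k : nat) := {ffun Bbar k -> K}.

Definition proj (K : fieldType) k (u : gn K k) : gbar K k := [ffun c => u (inl c)].

Definition gbar_scale (K : fieldType) k (a : K) (u : gbar K k) : gbar K k :=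
  [ffun c => a * u c].

(* coefficient d_{j+1} (resp. e_{j+1}) of an element of gbar_n, 0 if j >= k *)
Definition dcoef (K : fieldType) k (u : gbar K k) (j : nat) : K :=
  match (insub j : option 'I_k) with Some i => u (inl (inr i)) | None => 0 end.
Definition ecoef (K : fieldType) k (u : gbar K k) (j : nat) : K :=
  match (insub j : option 'I_k) with Some i => u (inr i) | None => 0 end.

Definition rhobar (K : fieldType) (n : nat) (u : gbar K (n - 2)) : 'M[K]_n :=
  let a := u (inl (inl (inl (inl tt)))) in
  let b := u (inl (inl (inl (inr tt)))) in
  let c := u (inl (inl (inr tt))) in
  \matrix_(i < n, j < n)
    if (i : nat) == (n - 2)%N then
      (if (j < n - 2)%N then dcoef u j else if (j : nat) == (n - 2)%N then a else b)
    else if (i : nat) == (n - 1)%N then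
      (if (j < n - 2)%N then ecoef u j else if (j : nat) == (n - 2)%N then c else - a)
    else 0.
Arguments rhobar {K} n u.

From HB Require Import structures.
From mathcomp Require Import all_boot all_order all_algebra.
From mathcomp Require Import ring zify.
Import GRing.Theory.
Local Open Scope ring_scope.

(* Modulo its centre, g_n is sl_2 = <h, x_+, x_-> acting on n - 2 commuting copies of
   the standard module K^2 = <y_{i,+}, y_{i,-}>.  Moving the last two rows and columns
   into blocks, rho_bar(x) becomes [[0, 0], [Y(x), S(x)]], with S(x) = [[a, b], [c, -a]]
   and Y(x) the 2 x (n-2) matrix of the d_i, e_i.  The commutator of two such matrices
   is [[0, 0], [S Y' - S' Y, [S, S']]], so the bracket identity reduces to the structure
   constants of g_n / Z(g_n): [S(x), S(x')] = S([x, x']) and S(x) Y(x') - S(x') Y(x)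
   = Y([x, x']). *)

Section DeltaSums.
Variable R : pzSemiRingType.

Lemma sum_mul0 (I : finType) (F : I -> R) : \sum_i F i * 0 = 0.
Proof. by rewrite big1 // => i _; rewrite mulr0. Qed.

Lemma sum_sum_mul0 (I J : finType) (F : I -> J -> R) : \sum_i \sum_j F i j * 0 = 0.
Proof. by rewrite big1 // => i _; rewrite sum_mul0. Qed.

Lemma sum_mul_delta (I : finType) (F : I -> R) i s :
  \sum_j F j * (s * (i == j)%:R) = F i * s.
Proof.
rewrite (bigD1 i) //= eqxx mulr1 big1 ?addr0 // => j.
by rewrite eq_sym => /negbTE ->; rewrite !mulr0.
Qed.

End DeltaSums.

Section SquareCast.
Variables (R : pzRingType) (p q : nat) (e : p = q).
Implicit Types A B : 'M[R]_p.

Lemma castmx_linear a A B :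
  castmx (e, e) (a *: A + B) = a *: castmx (e, e) A + castmx (e, e) B.
Proof. by case: q / e. Qed.

Lemma castmx_commutator A B :
  castmx (e, e) (A *m B - B *m A) =
  castmx (e, e) A *m castmx (e, e) B - castmx (e, e) B *m castmx (e, e) A.
Proof. by case: q / e. Qed.

Lemma mxtrace_castmx A : \tr (castmx (e, e) A) = \tr A.
Proof. by case: q / e. Qed.

End SquareCast.

Lemma mul_lower_block (R : pzRingType) m p (Y Y' : 'M[R]_(p, m)) (S S' : 'M[R]_p) :
  block_mx (0 : 'M_m) 0 Y S *m block_mx 0 0 Y' S' = block_mx 0 0 (S *m Y') (S *m S').
Proof. by rewrite mulmx_block !(mulmx0, mul0mx, addr0, add0r). Qed.

Lemma lower_block_commutator (R : pzRingType) m p (Y Y' : 'M[R]_(p, m)) (S S' : 'M[R]_p) :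
  block_mx (0 : 'M_m) 0 Y S *m block_mx 0 0 Y' S' - block_mx 0 0 Y' S' *m block_mx 0 0 Y S =
  block_mx 0 0 (S *m Y' - S' *m Y) (S *m S' - S' *m S).
Proof. by rewrite !mul_lower_block opp_block_mx add_block_mx !oppr0 !addr0. Qed.

Section Representation.
Variables (K : fieldType) (k : nat).
Implicit Types (u v : gn K k) (a b c : Bbar k).

Definition qH : Bbar k := inl (inl (inl (inl tt))).
Definition qXp : Bbar k := inl (inl (inl (inr tt))).
Definition qXm : Bbar k := inl (inl (inr tt)).
Definition qYp i : Bbar k := inl (inr i).
Definition qYm i : Bbar k := inr i.

Definition qbr_coef a b c : K :=
  let coef x s := s * (c == x)%:R in
  match lab (inl a : B k), lab (inl b : B k) with
  | LXp, LXm => coef qH 1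
  | LXm, LXp => coef qH (-1)
  | LH, LXp => coef qXp 2%:R
  | LXp, LH => coef qXp (- 2%:R)
  | LH, LXm => coef qXm (- 2%:R)
  | LXm, LH => coef qXm 2%:R
  | LH, LYp i => coef (qYp i) 1
  | LYp i, LH => coef (qYp i) (-1)
  | LH, LYm i => coef (qYm i) (-1)
  | LYm i, LH => coef (qYm i) 1
  | LXm, LYp i => coef (qYm i) 1
  | LYp i, LXm => coef (qYm i) (-1)
  | LXp, LYm i => coef (qYp i) 1
  | LYm i, LXp => coef (qYp i) (-1)
  | _, _ => 0
  end.

Lemma br_inr_l p (b : B k) : br K (inr p) b = 0.
Proof. by case: b => [[[[[[]|[]]|[]]|j]|j]|q]. Qed.

Lemma br_inr_r p (b : B k) : br K b (inr p) = 0.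
Proof. by case: b => [[[[[[]|[]]|[]]|j]|j]|q]. Qed.

Lemma zv_inl i j c : zv K i j (inl c) = 0.
Proof. by rewrite /zv; case: insubP => [p _ _|_]; rewrite ffunE. Qed.

Lemma br_inlE a b c : br K (inl a) (inl b) (inl c) = qbr_coef a b c.
Proof.
by case: a => [[[[[]|[]]|[]]|i]|i]; case: b => [[[[[]|[]]|[]]|j]|j];
  rewrite /br /qbr_coef /= ?ffunE ?zv_inl ?oppr0 ?mul1r ?mulN1r ?mulNr.
Qed.

Lemma proj_gbracketE u v c :
  proj (gbracket u v) c = \sum_a \sum_b u (inl a) * v (inl b) * qbr_coef a b c.
Proof.
rewrite ffunE sum_ffunE big_sumType /= [X in _ + X]big1 => [|p _]; last first.
  by rewrite sum_ffunE big1 // => b _; rewrite ffunE br_inr_l ffunE mulr0.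
rewrite addr0; apply: eq_bigr => a _.
rewrite sum_ffunE big_sumType /= [X in _ + X]big1 => [|p _]; last first.
  by rewrite ffunE br_inr_r ffunE mulr0.
by rewrite addr0; apply: eq_bigr => b _; rewrite ffunE br_inlE.
Qed.

Lemma sum_Bbar (F : Bbar k -> K) : \sum_a F a =
  F qH + F qXp + F qXm + \sum_i F (qYp i) + \sum_i F (qYm i).
Proof. by rewrite !big_sumType !(big_pred1 tt) // => -[]. Qed.

Ltac expand_bracket_coord :=
  rewrite proj_gbracketE; under eq_bigr do rewrite sum_Bbar;
  rewrite sum_Bbar !ffunE /qbr_coef /qH /qXp /qXm /qYp /qYm /= !big_split /=;
  rewrite ?mulr0 ?sum_mul0 ?sum_sum_mul0 ?sum_mul_delta.

Lemma proj_gbracket_H u v :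
  proj (gbracket u v) qH = proj u qXp * proj v qXm - proj u qXm * proj v qXp.
Proof. expand_bracket_coord; ring. Qed.

Lemma proj_gbracket_Xp u v :
  proj (gbracket u v) qXp = 2%:R * (proj u qH * proj v qXp - proj u qXp * proj v qH).
Proof. expand_bracket_coord; ring. Qed.

Lemma proj_gbracket_Xm u v :
  proj (gbracket u v) qXm = 2%:R * (proj u qXm * proj v qH - proj u qH * proj v qXm).
Proof. expand_bracket_coord; ring. Qed.

Lemma proj_gbracket_Yp u v i :
  proj (gbracket u v) (qYp i) =
  proj u qH * proj v (qYp i) - proj u (qYp i) * proj v qH
  + proj u qXp * proj v (qYm i) - proj u (qYm i) * proj v qXp.
Proof. expand_bracket_coord; ring. Qed.

Lemma proj_gbracket_Ym u v i :
  proj (gbracket u v) (qYm i) =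
  proj u (qYm i) * proj v qH - proj u qH * proj v (qYm i)
  + proj u qXm * proj v (qYp i) - proj u (qYp i) * proj v qXm.
Proof. expand_bracket_coord; ring. Qed.

Definition sl2_block (x : gbar K k) : 'M[K]_2 :=
  \matrix_(i < 2, j < 2)
    if i == 0 then (if j == 0 then x qH else x qXp)
    else (if j == 0 then x qXm else - x qH).

Definition y_block (x : gbar K k) : 'M[K]_(2, k) :=
  \matrix_(i < 2, j < k) if i == 0 then x (qYp j) else x (qYm j).

Definition rho_block (x : gbar K k) : 'M[K]_(k + 2) :=
  block_mx 0 0 (y_block x) (sl2_block x).

Lemma sl2_block_bracket u v :
  sl2_block (proj (gbracket u v)) =
  sl2_block (proj u) *m sl2_block (proj v) - sl2_block (proj v) *m sl2_block (proj u).
Proof.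
apply/matrixP => i j; rewrite !mxE !big_ord_recl !big_ord0 !mxE.
by case: i => [[|[|//]] ?]; case: j => [[|[|//]] ?];
  rewrite /= ?proj_gbracket_H ?proj_gbracket_Xp ?proj_gbracket_Xm; ring.
Qed.

Lemma y_block_bracket u v :
  y_block (proj (gbracket u v)) =
  sl2_block (proj u) *m y_block (proj v) - sl2_block (proj v) *m y_block (proj u).
Proof.
apply/matrixP => i j; rewrite !mxE !big_ord_recl !big_ord0 !mxE.
by case: i => [[|[|//]] ?];
  rewrite /= ?proj_gbracket_Yp ?proj_gbracket_Ym; ring.
Qed.

Lemma rho_block_linear (s : K) (x y : gbar K k) :
  rho_block (gbar_scale s x + y) = s *: rho_block x + rho_block y.
Proof.
rewrite /rho_block scale_block_mx add_block_mx !scaler0 !addr0.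
congr block_mx; apply/matrixP => i j; rewrite !mxE.
- by case: ifP; rewrite !ffunE.
- by do 2!case: ifP; rewrite !ffunE // mulrN opprD.
Qed.

Lemma mxtrace_rho_block x : \tr (rho_block x) = 0.
Proof.
by rewrite mxtrace_block mxtrace0 add0r /mxtrace !big_ord_recl big_ord0 !mxE /= addr0 subrr.
Qed.

Lemma rho_block_bracket u v :
  rho_block (proj (gbracket u v)) =
  rho_block (proj u) *m rho_block (proj v) - rho_block (proj v) *m rho_block (proj u).
Proof. by rewrite /rho_block lower_block_commutator y_block_bracket sl2_block_bracket. Qed.

End Representation.

Arguments rho_block {K k} x.

Section Rhobar.
Variables (K : fieldType) (n : nat) (hn : (2 <= n)%N).

Lemma rhobar_castmx (x : gbar K (n - 2)) :
  rhobar n x = castmx (subnK hn, subnK hn) (rho_block x).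
Proof.
apply: (canRL (castmxKV _ _)); apply/matrixP => i j; rewrite castmxE.
case: (split_ordP i) => i' ->; case: (split_ordP j) => j' ->.
all: rewrite ?block_mxEul ?block_mxEur ?block_mxEdl ?block_mxEdr !mxE /=.
all: move: (ltn_ord i') (ltn_ord j') => lti ltj.
1,2: by rewrite (ltn_eqF lti) ltn_eqF //; lia.
- case: i' lti => [[|[|//]] ?] _ /=; repeat (case: ifP => ?; try lia).
  + by rewrite /dcoef valK.
  + by rewrite /ecoef valK.
- case: i' lti => [[|[|//]] ?] _; case: j' ltj => [[|[|//]] ?] _ /=.
  all: by repeat (case: ifP => ?; try lia).
Qed.

End Rhobar.

Arguments rhobar_castmx {K n} hn x.

Theorem corollary3p6 (K : fieldType) (n : nat) (hn : (2 <= n)%N) :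
  (* rho_bar is K-linear *)
  (forall (a : K) (u v : gbar K (n - 2)),
      rhobar n (gbar_scale a u + v) = a *: rhobar n u + rhobar n v) /\
  (* rho_bar takes values in sl_n(K) *)
  (forall u : gbar K (n - 2), \tr (rhobar n u) = 0) /\
  (* rho_bar preserves brackets: [x mod Z, y mod Z] = [x, y] mod Z *)
  (forall u v : gn K (n - 2),
      rhobar n (proj (gbracket u v)) =
      rhobar n (proj u) *m rhobar n (proj v) - rhobar n (proj v) *m rhobar n (proj u)).
Proof.
split; [|split].
- by move=> a u v; rewrite !(rhobar_castmx hn) rho_block_linear castmx_linear.
- by move=> u; rewrite (rhobar_castmx hn) mxtrace_castmx mxtrace_rho_block.
- by move=> u v; rewrite !(rhobar_castmx hn) rho_block_bracket castmx_commutator.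
Qed.
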